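(* The equation \[ V=1+\frac{y}{x}-\frac{1}{x}V-V_x-\frac{1}{x}V_y+\frac{1}{x}\log V \] has one and only one solution $V$ in the ring $A$ (with $V\in U$, so that $\log V$ is defined).
   Context: Let $A$ be the ring of formal series $a=\sum_{n=0}^\infty \frac{q_n(y)}{x^n}$, where each $q_n$ is a polynomial with complex coefficients of degree at most $n$ (so $q_0$ is a constant), with the obvious addition and multiplication (equivalently $A\cong\mathbb{C}[[X,Y]]$ via $X\mapsto x^{-1}$, $Y\mapsto y x^{-1}$). For nonzero $a$ let $\deg(a)$ be the least $n$ with $q_n\neq0$, $\deg(0)=\infty$, and give $A$ the complete metric induced by $\|a\|=2^{-\deg(a)}$. Formal derivatives: $a_x=-\sum_{n\ge1}\frac{n q_n(y)}{x^{n+1}}$, $a_y=\sum_{n\ge1}\frac{q_n'(y)}{x^n}$. Let $U\subset A$ be the set of elements with $q_0=1$; for $1+u\in U$ define $\log(1+u)=\sum_{k\ge1}(-1)^{k+1}\frac{u^k}{k}$ (convergent in $A$). *)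

From HB Require Import structures.
From mathcomp Require Import all_boot all_order all_algebra.
From mathcomp Require Import reals.
From mathcomp Require Import complex.
Set Implicit Arguments. Unset Strict Implicit. Unset Printing Implicit Defensive.
Import Order.TTheory GRing.Theory Num.Theory.
Local Open Scope ring_scope.

(* An element  a = \sum_n q_n(y) / x^n  of A is represented by its coefficient
   sequence n |-> q_n, a polynomial in y with complex coefficients. *)
Definition seqA (R : realType) := nat -> {poly R[i]}.

Definition inA (R : realType) (a : seqA R) : Prop :=
  forall n, (size (a n) <= n.+1)%N.

Definition inU (R : realType) (a : seqA R) : Prop := inA a /\ a 0%N = 1.

Section Ops.
Variable R : realType.
Local Notation A := (seqA R).

Definition addA (a b : A) : A := fun n => a n + b n.
Definition oppA (a : A) : A := fun n => - a n.
Definition subA (a b : A) : A := fun n => a n - b n.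
Definition oneA : A := fun n => if n is 0%N then 1 else 0.
Definition y_over_x : A := fun n => if n == 1%N then 'X else 0.
Definition invxA (a : A) : A := fun n => if n is m.+1 then a m else 0.
Definition mulA (a b : A) : A :=
  fun n => \sum_(k < n.+1) a k * b (n - k)%N.
Fixpoint expA (a : A) (k : nat) : A :=
  if k is k'.+1 then mulA a (expA a k') else oneA.
(* formal derivatives:
   a_x = - \sum_{n>=1} n q_n / x^{n+1},  i.e. (a_x)_n = -(n-1) q_{n-1}
   a_y = \sum_n q_n'(y) / x^n *)
Definition dxA (a : A) : A :=
  fun n => if n is m.+1 then - (m%:R *: a m) else 0.
Definition dyA (a : A) : A := fun n => (a n)^`().
(* log(1+u) = \sum_{k>=1} (-1)^(k+1) u^k / k, for 1+u in U.  Since u^k has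
   deg >= k, the coefficient of x^{-n} of the (metrically convergent) series
   is the finite sum over 1 <= k <= n. *)
Definition logA (v : A) : A :=
  let u := subA v oneA in
  fun n => \sum_(1 <= k < n.+1) (((-1) ^+ k.+1) / k%:R) *: expA u k n.

Definition rhs4p1 (V : A) : A :=
  addA (subA (subA (subA (addA oneA y_over_x) (invxA V)) (dxA V))
             (invxA (dyA V)))
       (invxA (logA V)).
End Ops.

From Pilot Require (* Re-import so that [addA], [mulA], ... denote the series operations rather
   than the MathComp lemmas of the same names. *)
Import Defs.
From HB Require Import structures.
From mathcomp Require Import all_boot all_order all_algebra.
From mathcomp Require Import qpoly reals complex.
Import GRing.Theory Num.Theory.
Import Defs.
Set Implicit Arguments. Unset Strict Implicit. Unset Printing Implicit Defensive.
Local Open Scope ring_scope.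

(* The [x^-n] coefficient of the right-hand side involves only [q_j] for
   [j < n] (it is [1] for [n = 0]), i.e. the map is a contraction for the
   [2^-deg] metric.  Its unique fixed point is therefore obtained
   coefficientwise: iterating from [1], the [n]-th coefficient is frozen after
   [n + 1] steps, and two fixed points agree by strong induction on [n].  The
   iterates stay in [A] because every operation respects [deg q_n <= n]. *)

Section CausalFixpoint.
Variables (T : Type) (F : (nat -> T) -> nat -> T).
Hypothesis F_causal :
  forall f g n, (forall j, (j < n)%N -> f j = g j) -> F f n = F g n.

Lemma causal_fixpoint_unique f g :
  (forall n, f n = F f n) -> (forall n, g n = F g n) -> forall n, f n = g n.
Proof. by move=> hf hg; elim/ltn_ind=> n IH; rewrite hf hg; apply: F_causal. Qed.

Variable f0 : nat -> T.

Definition causal_fix : nat -> T := fun n => iter n.+1 F f0 n.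

Lemma iter_causal_succ m j : (j <= m)%N -> iter m.+2 F f0 j = iter m.+1 F f0 j.
Proof.
elim: m j => [|m IH] j hj; rewrite [in LHS]iterS [in RHS]iterS.
  by apply: F_causal => i; rewrite ltnNge (leq_trans hj).
by apply: F_causal => i hi; apply: IH; rewrite -ltnS (leq_trans hi).
Qed.

Lemma iter_causal_fix m j : (j < m)%N -> iter m F f0 j = causal_fix j.
Proof.
move=> /subnK <-; elim: (m - j.+1)%N => [|d IH] //.
by rewrite addSn addnS iter_causal_succ ?leq_addl // -addnS.
Qed.

Lemma causal_fixE n : causal_fix n = F causal_fix n.
Proof. by rewrite /causal_fix iterS; apply: F_causal => j /iter_causal_fix. Qed.

Lemma causal_fix_ind (Q : nat -> T -> Prop) :
  (forall n, Q n (f0 n)) ->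
  (forall f, (forall n, Q n (f n)) -> forall n, Q n (F f n)) ->
  forall n, Q n (causal_fix n).
Proof.
move=> Q0 QF n; have Qiter k j : Q j (iter k F f0 j).
  by elim: k j => [|k IH] //; apply: QF.
exact: Qiter.
Qed.

End CausalFixpoint.

Section SeriesRing.
Variable R : realType.
Local Notation A := (seqA R).

Lemma inAP (a : A) : inA a <-> forall n, a n \is a poly_of_size n.+1.
Proof. by []. Qed.

Lemma inA_widen (a : A) n : inA a -> a n \is a poly_of_size n.+2.
Proof. by move=> ha; rewrite qualifE /= (leq_trans (ha n)). Qed.

Lemma inA_oneA : inA (oneA R).
Proof. by case=> [|n] /=; rewrite ?size_poly1 ?size_poly0. Qed.

Lemma inA_y_over_x : inA (y_over_x R).
Proof. by case=> [|[|n]]; rewrite /y_over_x /= ?size_poly0 ?size_polyX. Qed.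

Lemma inA_addA (a b : A) : inA a -> inA b -> inA (addA a b).
Proof. by move=> /inAP ha /inAP hb; apply/inAP => n; rewrite rpredD. Qed.

Lemma inA_subA (a b : A) : inA a -> inA b -> inA (subA a b).
Proof. by move=> /inAP ha /inAP hb; apply/inAP => n; rewrite rpredB. Qed.

Lemma inA_invxA (a : A) : inA a -> inA (invxA a).
Proof.
by move=> ha; apply/inAP => -[|n] /=; rewrite ?rpred0 ?inA_widen.
Qed.

Lemma inA_dxA (a : A) : inA a -> inA (dxA a).
Proof.
by move=> ha; apply/inAP => -[|n] /=; rewrite ?rpred0 ?rpredN ?rpredZ ?inA_widen.
Qed.

Lemma inA_dyA (a : A) : inA a -> inA (dyA a).
Proof.
move=> ha n; apply: leq_trans (ha n).
by rewrite /dyA /deriv (leq_trans (size_poly _ _)) ?leq_pred.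
Qed.

Lemma inA_mulA (a b : A) : inA a -> inA b -> inA (mulA a b).
Proof.
move=> ha hb; apply/inAP => n; apply: rpred_sum => -[k /= le_k_n] _.
apply: leq_trans (size_polyMleq _ _) _.
rewrite -subn1 leq_subLR (leq_trans (leq_add (ha k) (hb (n - k)%N))) //.
by rewrite addSn addnS add1n subnKC.
Qed.

Lemma inA_expA (a : A) k : inA a -> inA (expA a k).
Proof. by move=> ha; elim: k => [|k IH]; [apply: inA_oneA | apply: inA_mulA]. Qed.

Lemma inA_logA (v : A) : inA v -> inA (logA v).
Proof.
move=> hv; apply/inAP => n; apply: rpred_sum => k _; rewrite rpredZ //.
by have /inAP := inA_expA k (inA_subA hv inA_oneA).
Qed.

Lemma inA_rhs4p1 (v : A) : inA v -> inA (rhs4p1 v).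
Proof.
move=> hv; apply: inA_addA; last exact/inA_invxA/inA_logA.
apply: inA_subA; last exact/inA_invxA/inA_dyA.
apply: inA_subA; last exact: inA_dxA.
apply: inA_subA; last exact: inA_invxA.
exact: inA_addA inA_oneA inA_y_over_x.
Qed.

Lemma expA_eq_upto (a b : A) k n :
  (forall j, (j <= n)%N -> a j = b j) -> expA a k n = expA b k n.
Proof.
elim: k n => [|k IH] n eq_ab //=; apply: eq_bigr => -[i /= lt_i_n] _.
by rewrite eq_ab // IH // => j le_j; rewrite eq_ab // (leq_trans le_j) ?leq_subr.
Qed.

(* Every term of the right-hand side other than [1 + y/x] is divided by [x]
   or is [V_x], so its [x^-n] coefficient only involves [q_j] for [j < n]. *)
Lemma rhs4p1_causal (v w : A) n :
  (forall j, (j < n)%N -> v j = w j) -> rhs4p1 v n = rhs4p1 w n.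
Proof.
case: n => [|n] eq_vw //; rewrite /rhs4p1 /addA /subA /= /dyA /logA.
rewrite !eq_vw //; congr (_ + _); apply: eq_bigr => k _; congr (_ *: _).
by apply: expA_eq_upto => j le_j_n; rewrite /subA eq_vw.
Qed.

Lemma rhs4p1_0 (v : A) : rhs4p1 v 0 = 1.
Proof. by rewrite /rhs4p1 /addA /subA /= !addr0 !subr0. Qed.

End SeriesRing.

Theorem theorem4p1 (R : realType) :
  (exists V : seqA R, inU V /\ (forall n, V n = rhs4p1 V n)) /\
  (forall V W : seqA R,
      inU V -> (forall n, V n = rhs4p1 V n) ->
      inU W -> (forall n, W n = rhs4p1 W n) ->
      forall n, V n = W n).
Proof.
have causal := @rhs4p1_causal R.
split; last by move=> V W _ fixV _ fixW; exact: (causal_fixpoint_unique causal fixV fixW).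
pose V := causal_fix (@rhs4p1 R) (oneA R).
have fixV n : V n = rhs4p1 V n by exact: (causal_fixE causal).
exists V; split=> //; split; last by rewrite fixV rhs4p1_0.
apply: (@causal_fix_ind _ _ _ (fun n (p : {poly R[i]}) => size p <= n.+1)%N).
  exact: inA_oneA.
by move=> f; apply: inA_rhs4p1.
Qed.
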